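(* Let $SI$ be a function assigning a real number $SI(S;X_1,X_2)$ to every joint distribution of finite-valued random variables $(S,X_1,X_2)$, and let $\overline{SI}(S;X_1,X_2):=\sup_{f} SI(f(S);X_1,X_2)$, the supremum being over all functions $f$ from the alphabet of $S$ to an arbitrary finite set. Then: (1) if $SI$ satisfies property $( * )$, then $\overline{SI}$ also satisfies property $( * )$; (2) if $SI$ is right monotonic, then $\overline{SI}$ is also right monotonic.
   Context: Property $( * )$ for a measure $M$: the value $M(S;X_1,X_2)$ depends only on the pair marginal distributions $P_{SX_1}$ and $P_{SX_2}$ of $(S,X_1)$ and $(S,X_2)$. Right monotonicity for a measure $M$: $M(S;X_1,X_2)\ge M(S;f_1(X_1),f_2(X_2))$ for all random variables $(S,X_1,X_2)$ and all functions $f_1,f_2$ on the alphabets of $X_1,X_2$. *)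

From HB Require Import structures.
From mathcomp Require Import all_boot all_order all_algebra.
From mathcomp Require Import all_classical all_reals ereal.
Set Implicit Arguments. Unset Strict Implicit. Unset Printing Implicit Defensive.
Import Order.TTheory GRing.Theory Num.Theory.
Local Open Scope ring_scope.

Record dist (R : realType) (T : finType) := Dist {
  pmf :> {ffun T -> R};
  pmf_ge0 : forall x, 0 <= pmf x;
  pmf_sum1 : \sum_(x : T) pmf x = 1 }.

Section Push.
Variables (R : realType) (T U : finType) (g : T -> U).

Definition push_pmf (P : dist R T) : {ffun U -> R} :=
  [ffun y => \sum_(x | g x == y) P x].

Lemma push_ge0 (P : dist R T) y : 0 <= push_pmf P y.
Proof. by rewrite ffunE; apply: sumr_ge0 => x _; exact: pmf_ge0. Qed.

Lemma push_sum1 (P : dist R T) : \sum_(y : U) push_pmf P y = 1.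
Proof.
rewrite -(pmf_sum1 P).
under eq_bigr => y _ do rewrite ffunE big_mkcond /=.
rewrite exchange_big /=; apply: eq_bigr => x _.
rewrite (bigD1 (g x)) //= eqxx big1 ?addr0 // => y /negbTE ny.
by rewrite eq_sym ny.
Qed.

Definition push (P : dist R T) : dist R U :=
  Dist (@push_ge0 P) (@push_sum1 P).
End Push.

(* A measure M(S;X1,X2): a V-valued function of the joint distribution of
   finite-valued (S,X1,X2), with alphabets TS, T1, T2. *)
Definition measure (R : realType) (V : Type) :=
  forall TS T1 T2 : finType, dist R (TS * T1 * T2)%type -> V.

Definition margSX1 (R : realType) (TS T1 T2 : finType)
  (P : dist R (TS * T1 * T2)%type) : dist R (TS * T1)%type :=
  push (fun x : (TS * T1 * T2)%type => (x.1.1, x.1.2)) P.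
Definition margSX2 (R : realType) (TS T1 T2 : finType)
  (P : dist R (TS * T1 * T2)%type) : dist R (TS * T2)%type :=
  push (fun x : (TS * T1 * T2)%type => (x.1.1, x.2)) P.

Definition prop_star (R : realType) (V : Type) (M : measure R V) : Prop :=
  forall (TS T1 T2 : finType) (P Q : dist R (TS * T1 * T2)%type),
    pmf (margSX1 P) = pmf (margSX1 Q) ->
    pmf (margSX2 P) = pmf (margSX2 Q) ->
    M TS T1 T2 P = M TS T1 T2 Q.

Definition right_monotone (R : realType) (d : Order.disp_t) (V : porderType d)
  (M : measure R V) : Prop :=
  forall (TS T1 T2 T1' T2' : finType) (f1 : T1 -> T1') (f2 : T2 -> T2')
    (P : dist R (TS * T1 * T2)%type),
    (M TS T1' T2' (push (fun x : (TS * T1 * T2)%type => (x.1.1, f1 x.1.2, f2 x.2)) P)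
      <= M TS T1 T2 P)%O.

Definition SIbar (R : realType) (SI : measure R R) : measure R (\bar R) :=
  fun TS T1 T2 P =>
    ereal_sup [set y : \bar R | exists (T' : finType) (f : TS -> T'),
      y = (SI T' T1 T2
             (push (fun x : (TS * T1 * T2)%type => (f x.1.1, x.1.2, x.2)) P))%:E].

From mathcomp Require Import all_boot all_order all_algebra.
From mathcomp Require Import all_classical all_reals ereal.
Set Implicit Arguments. Unset Strict Implicit. Unset Printing Implicit Defensive.
Import Order.TTheory GRing.Theory Num.Theory.
Local Open Scope ring_scope.

(* Relabelling S by f commutes with forming the pair marginals and with
   relabelling X1 and X2.  Hence, under ( * ), each value SI(f(S);X1,X2)
   in the supremum defining SIbar depends only on the pair marginals, and
   under right monotonicity each value SI(f(S);f1(X1),f2(X2)) is bounded by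
   SI(f(S);X1,X2), a member of the supremum for (S;X1,X2). *)

Section Pushforward.
Variable R : realType.

Lemma dist_inj (T : finType) (P Q : dist R T) : pmf P = pmf Q -> P = Q.
Proof.
case: P Q => p p0 p1 [q q0 q1] /= e; subst q.
by rewrite (Prop_irrelevance p0 q0) (Prop_irrelevance p1 q1).
Qed.

Lemma push_comp (T U W : finType) (k : T -> U) (g : U -> W) (P : dist R T) :
  push g (push k P) = push (g \o k) P.
Proof.
apply: dist_inj; apply/ffunP => w /=; rewrite !ffunE.
under eq_bigr => u _ do rewrite ffunE.
rewrite (exchange_big_dep xpredT) //= [RHS]big_mkcond; apply: eq_bigr => x _.
rewrite big_mkcond /= (bigD1 (k x)) //= eqxx andbT big1 ?addr0 //.
by move=> u nu; rewrite [k x == u]eq_sym (negbTE nu) andbF.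
Qed.

Lemma eq_push (T U : finType) (g g' : T -> U) (P : dist R T) :
  g =1 g' -> push g P = push g' P.
Proof.
move=> eq_g; apply: dist_inj; apply/ffunP => u /=; rewrite !ffunE.
by apply: eq_bigl => x; rewrite eq_g.
Qed.

Lemma push_commute (T U U' W : finType) (k : T -> U) (g : U -> W)
    (k' : T -> U') (g' : U' -> W) (P : dist R T) :
  g \o k =1 g' \o k' -> push g (push k P) = push g' (push k' P).
Proof. by move=> eq_gk; rewrite !push_comp; exact: eq_push. Qed.

End Pushforward.

Definition relabel_S (TS T' T1 T2 : finType) (f : TS -> T') :
    TS * T1 * T2 -> T' * T1 * T2 :=
  fun x => (f x.1.1, x.1.2, x.2).

Definition relabel_X (TS T1 T2 T1' T2' : finType)
    (f1 : T1 -> T1') (f2 : T2 -> T2') : TS * T1 * T2 -> TS * T1' * T2' :=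
  fun x => (x.1.1, f1 x.1.2, f2 x.2).

Section Relabelling.
Variables (R : realType) (TS T1 T2 : finType).
Implicit Type P : dist R (TS * T1 * T2)%type.

Lemma margSX1_relabel_S (T' : finType) (f : TS -> T') P :
  margSX1 (push (relabel_S f) P) = push (fun w => (f w.1, w.2)) (margSX1 P).
Proof. by apply: push_commute => -[[]]. Qed.

Lemma margSX2_relabel_S (T' : finType) (f : TS -> T') P :
  margSX2 (push (relabel_S f) P) = push (fun w => (f w.1, w.2)) (margSX2 P).
Proof. by apply: push_commute => -[[]]. Qed.

Lemma relabel_XS (T' T1' T2' : finType) (f : TS -> T')
    (f1 : T1 -> T1') (f2 : T2 -> T2') P :
  push (relabel_S f) (push (relabel_X f1 f2) P) =
  push (relabel_X f1 f2) (push (relabel_S f) P).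
Proof. by apply: push_commute => -[[]]. Qed.

End Relabelling.

Lemma SIbar_prop_star (R : realType) (SI : measure R R) :
  prop_star SI -> prop_star (SIbar SI).
Proof.
move=> SI_star TS T1 T2 P Q eq1 eq2.
have eq_SI (T' : finType) (f : TS -> T') :
    SI T' T1 T2 (push (relabel_S f) P) = SI T' T1 T2 (push (relabel_S f) Q).
  apply: SI_star.
  - by rewrite !margSX1_relabel_S (dist_inj eq1).
  - by rewrite !margSX2_relabel_S (dist_inj eq2).
rewrite /SIbar; congr ereal_sup.
rewrite /relabel_S in eq_SI.
by apply/seteqP; split => y [T' [f ->]]; exists T', f; rewrite eq_SI.
Qed.

Lemma SIbar_right_monotone (R : realType) (SI : measure R R) :
  right_monotone SI -> right_monotone (SIbar SI).
Proof.
move=> SI_mono TS T1 T2 T1' T2' f1 f2 P.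
apply: ge_ereal_sup => y [T' [f ->]].
apply: (@le_trans _ _ (SI T' T1 T2 (push (relabel_S f) P))%:E).
- by rewrite lee_fin [X in SI _ _ _ X](relabel_XS f f1 f2 P); exact: SI_mono.
- by apply: ereal_sup_ubound; exists T', f.
Qed.

Theorem lemma3 (R : realType) (SI : measure R R) :
  (prop_star SI -> prop_star (SIbar SI)) /\
  (right_monotone SI -> right_monotone (SIbar SI)).
Proof. by split; [exact: SIbar_prop_star | exact: SIbar_right_monotone]. Qed.
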